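(* Let $\mathcal M$ be a well-shaped tetrahedral mesh in $\mathbb R^3$ with parameter $\rho$, let $q$ be a point in $\mathcal M$, and let $p$ be a vertex of $\mathcal M$ nearest to $q$ among the vertices of $\mathcal M$. Let $\tau$ be the first tetrahedron of $\mathcal M$ intersected by the segment $pq$ when travelling from $p$ towards $q$ (so $p$ is a vertex of $\tau$), suppose $q$ is not in the interior of $\tau$, and let $p'$ be the intersection of $pq$ with the face of $\tau$ opposite to $p$. Then $|pp'|>\frac{6}{\rho^2+3}|pq|$.
   Context: A tetrahedral mesh is a subdivision of a region of $\mathbb R^3$ into tetrahedra, two tetrahedra being adjacent iff they share a face. It is well-shaped with parameter $\rho\ge3$ if every tetrahedron $t$ satisfies $R(t)/r(t)<\rho$, where $r(t)$ is the radius of the insphere and $R(t)$ the radius of the circumsphere of $t$. *)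

From Stdlib Require Import Reals Lra List Permutation.
Import ListNotations.
Open Scope R_scope.

Record pt : Type := Pt { px : R; py : R; pz : R }.

Definition padd (u v : pt) : pt := Pt (px u + px v) (py u + py v) (pz u + pz v).
Definition psub (u v : pt) : pt := Pt (px u - px v) (py u - py v) (pz u - pz v).
Definition pscale (k : R) (u : pt) : pt := Pt (k * px u) (k * py u) (k * pz u).
Definition dot (u v : pt) : R := px u * px v + py u * py v + pz u * pz v.
Definition cross (u v : pt) : pt :=
  Pt (py u * pz v - pz u * py v) (pz u * px v - px u * pz v) (px u * py v - py u * px v).
Definition pdist (u v : pt) : R := sqrt (dot (psub u v) (psub u v)).

Fixpoint in_conv (l : list pt) (x : pt) : Prop :=
  match l with
  | [] => False
  | v :: l' => x = v \/
      exists (lam : R) (y : pt), 0 <= lam <= 1 /\ in_conv l' y /\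
        x = padd (pscale lam v) (pscale (1 - lam) y)
  end.

Record tet : Type := Tet { ta : pt; tb : pt; tc : pt; td : pt }.
Definition verts (t : tet) : list pt := [ta t; tb t; tc t; td t].

Definition nondegenerate (t : tet) : Prop :=
  dot (psub (tb t) (ta t)) (cross (psub (tc t) (ta t)) (psub (td t) (ta t))) <> 0.

Definition in_tet (t : tet) (x : pt) : Prop := in_conv (verts t) x.

Definition in_interior (t : tet) (x : pt) : Prop :=
  exists eps, 0 < eps /\ forall y, pdist x y < eps -> in_tet t y.

Definition ball_in_tet (c : pt) (r : R) (t : tet) : Prop :=
  forall y, pdist c y <= r -> in_tet t y.

Definition is_inradius (t : tet) (r : R) : Prop :=
  0 < r /\ (exists c, ball_in_tet c r t) /\
  (forall c r', ball_in_tet c r' t -> r' <= r).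

Definition is_circumradius (t : tet) (Rc : R) : Prop :=
  exists c, pdist c (ta t) = Rc /\ pdist c (tb t) = Rc /\
            pdist c (tc t) = Rc /\ pdist c (td t) = Rc.

Definition is_tet_mesh (M : list tet) : Prop :=
  (forall t, In t M -> nondegenerate t) /\
  (forall i j t1 t2, i <> j -> nth_error M i = Some t1 -> nth_error M j = Some t2 ->
     (forall x, ~ (in_interior t1 x /\ in_interior t2 x)) /\
     exists S : list pt,
       (forall v, In v S <-> In v (verts t1) /\ In v (verts t2)) /\
       (forall x, in_tet t1 x /\ in_tet t2 x <-> in_conv S x)).

Definition well_shaped (rho : R) (M : list tet) : Prop :=
  3 <= rho /\
  forall t, In t M -> forall r Rc, is_inradius t r -> is_circumradius t Rc -> Rc / r < rho.

Definition mesh_vertex (M : list tet) (v : pt) : Prop :=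
  exists t, In t M /\ In v (verts t).

Definition in_mesh (M : list tet) (x : pt) : Prop :=
  exists t, In t M /\ in_tet t x.

(* Let r and R be the inradius and circumradius of tau, so R < rho r.
   (1) The inscribed ball of tau lies between the face abc and the parallel
       plane through p, so its diameter is at most the height of p over abc,
       hence at most |pp'| since p' lies on that face: 2 r <= |pp'|.
   (2) The circumcentre o is equidistant from p, a, b, c, and p is nearer to q
       than a, b, c; so the affine function x |-> (o - q).(x - p) is >= 0 on
       a, b, c, hence at p', hence along the ray pq.  Then
       |pq|^2 <= (o - p).(q - p) <= R |pq|, i.e. |pq| <= R.
   (3) |pq| <= R < rho r <= rho |pp'| / 2 <= (rho^2 + 3)/6 |pp'|.
   The shape hypothesis only constrains radii satisfying [is_inradius] and
   [is_circumradius], so both must be exhibited.  This is done with barycentric coordinates: a ball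
   B(c, r) lies in tau iff each coordinate of c is at least r times the length
   of its gradient; this yields the inradius 1 / sum_i |grad_i| and the width
   bound (1). *)

From Stdlib Require Import Reals List Permutation Lra Psatz Lia.
Import ListNotations.
Open Scope R_scope.

Ltac coords := unfold dot, cross, psub, padd, pscale in *; simpl in *.

Lemma pt_eq (u v : pt) : px u = px v -> py u = py v -> pz u = pz v -> u = v.
Proof. destruct u, v; simpl; intros; subst; reflexivity. Qed.

Lemma dot_ge0 (u : pt) : 0 <= dot u u.
Proof. coords; nra. Qed.

(* Lagrange's identity makes the Cauchy-Schwarz inequality a sum of squares. *)
Lemma dot_sq_le (u v : pt) : dot u v * dot u v <= dot u u * dot v v.
Proof.
  destruct u as [a b c], v as [x y z]; coords.
  assert (E : (a*a+b*b+c*c)*(x*x+y*y+z*z) - (a*x+b*y+c*z)*(a*x+b*y+c*z)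
     = (a*y-b*x)^2 + (a*z-c*x)^2 + (b*z-c*y)^2) by ring.
  pose proof (pow2_ge_0 (a*y-b*x)); pose proof (pow2_ge_0 (a*z-c*x));
    pose proof (pow2_ge_0 (b*z-c*y)); lra.
Qed.

Definition norm (u : pt) : R := sqrt (dot u u).

Lemma pdist_sym (x y : pt) : pdist x y = pdist y x.
Proof. unfold pdist; f_equal; coords; ring. Qed.

Lemma pdist_padd (c v : pt) : pdist c (padd c v) = norm v.
Proof. unfold pdist, norm; f_equal; coords; ring. Qed.

Lemma norm_ge0 (u : pt) : 0 <= norm u.
Proof. apply sqrt_pos. Qed.

Lemma norm_sq (u : pt) : norm u * norm u = dot u u.
Proof. apply sqrt_sqrt, dot_ge0. Qed.

Lemma cauchy_schwarz (u v : pt) : dot u v <= norm u * norm v.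
Proof.
  unfold norm; rewrite <- sqrt_mult_alt by apply dot_ge0.
  eapply Rle_trans; [apply Rle_abs|].
  rewrite <- sqrt_Rsqr_abs; apply sqrt_le_1_alt; apply dot_sq_le.
Qed.

Lemma norm_scale (k : R) (u : pt) : norm (pscale k u) = Rabs k * norm u.
Proof.
  unfold norm; rewrite <- sqrt_Rsqr_abs, <- sqrt_mult_alt by apply Rle_0_sqr.
  f_equal; unfold Rsqr; coords; ring.
Qed.

Lemma cauchy_schwarz_lower (u v : pt) : - (norm u * norm v) <= dot u v.
Proof.
  pose proof (cauchy_schwarz u (pscale (-1) v)) as C.
  rewrite norm_scale, Rabs_left in C by lra.
  replace (dot u (pscale (-1) v)) with (- dot u v) in C by (coords; ring); lra.
Qed.

Lemma pdist_ge0 (x y : pt) : 0 <= pdist x y.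
Proof. apply norm_ge0. Qed.

Lemma pdist_sq (x y : pt) : pdist x y * pdist x y = dot (psub x y) (psub x y).
Proof. apply norm_sq. Qed.

Lemma norm_step (g : pt) (s : R) :
  0 < norm g -> norm (pscale (s / norm g) g) = Rabs s.
Proof.
  intro Hg; rewrite norm_scale; unfold Rdiv.
  rewrite Rabs_mult, Rabs_inv, (Rabs_right (norm g)) by lra.
  field; lra.
Qed.

Lemma dot_step (g : pt) (s : R) :
  0 < norm g -> dot g (pscale (s / norm g) g) = s * norm g.
Proof.
  intro Hg.
  replace (dot g (pscale (s / norm g) g)) with (s / norm g * dot g g) by (coords; ring).
  rewrite <- norm_sq; field; lra.
Qed.

Lemma conv_affine_lower (l : list pt) (x n : pt) (k m : R) :
  in_conv l x -> (forall v, In v l -> m <= dot n v + k) -> m <= dot n x + k.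
Proof.
  revert x; induction l as [|v l IH]; simpl; intros x Hx Hv; [contradiction|].
  destruct Hx as [->|(lam & y & Hlam & Hy & ->)]; [apply Hv; auto|].
  assert (m <= dot n v + k) by (apply Hv; auto).
  assert (m <= dot n y + k) by (apply IH; auto).
  replace (dot n (padd (pscale lam v) (pscale (1 - lam) y)) + k)
    with (lam * (dot n v + k) + (1 - lam) * (dot n y + k)) by (coords; ring).
  nra.
Qed.

Lemma conv_affine_upper (l : list pt) (x n : pt) (k m : R) :
  in_conv l x -> (forall v, In v l -> dot n v + k <= m) -> dot n x + k <= m.
Proof.
  intros Hx Hv.
  assert (Hneg : forall y, dot (pscale (-1) n) y + - k = - (dot n y + k))
    by (intro; coords; ring).
  enough (- m <= dot (pscale (-1) n) x + - k) by (rewrite Hneg in *; lra).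
  apply (conv_affine_lower l); auto.
  intros v Hin; rewrite Hneg; specialize (Hv v Hin); lra.
Qed.

Lemma conv_affine_const (l : list pt) (x n : pt) (k m : R) :
  in_conv l x -> (forall v, In v l -> dot n v + k = m) -> dot n x + k = m.
Proof.
  intros Hx Hv; apply Rle_antisym.
  - apply (conv_affine_upper l); auto; intros v Hin; rewrite Hv; auto; lra.
  - apply (conv_affine_lower l); auto; intros v Hin; rewrite Hv; auto; lra.
Qed.

Fixpoint comb (ws : list R) (vs : list pt) : pt :=
  match ws, vs with
  | w :: ws', v :: vs' => padd (pscale w v) (comb ws' vs')
  | _, _ => Pt 0 0 0
  end.

Definition sumR (ws : list R) : R := fold_right Rplus 0 ws.

Lemma comb_scale (k : R) (ws : list R) (vs : list pt) :
  comb (map (Rmult k) ws) vs = pscale k (comb ws vs).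
Proof.
  revert vs; induction ws as [|w ws IH]; intros [|v vs]; simpl;
    try (apply pt_eq; coords; ring).
  rewrite IH; apply pt_eq; coords; ring.
Qed.

Lemma sumR_scale (k : R) (ws : list R) : sumR (map (Rmult k) ws) = k * sumR ws.
Proof. induction ws as [|w ws IH]; simpl; [ring|]; rewrite IH; ring. Qed.

Lemma sumR_nonneg (ws : list R) : Forall (Rle 0) ws -> 0 <= sumR ws.
Proof. induction 1; simpl; lra. Qed.

Lemma comb_null (ws : list R) (vs : list pt) :
  Forall (Rle 0) ws -> sumR ws = 0 -> comb ws vs = Pt 0 0 0.
Proof.
  revert vs; induction ws as [|w ws IH]; intros [|v vs] Hpos Hsum; auto.
  inversion Hpos as [|? ? Hw Hws]; subst; simpl in Hsum.
  pose proof (sumR_nonneg ws Hws).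
  simpl; rewrite IH by (auto; lra).
  replace w with 0 by lra; apply pt_eq; coords; ring.
Qed.

Lemma conv_comb (ws : list R) (vs : list pt) :
  length ws = length vs -> Forall (Rle 0) ws -> sumR ws = 1 ->
  in_conv vs (comb ws vs).
Proof.
  revert ws; induction vs as [|v vs IH]; intros [|w ws] Hlen Hpos Hsum;
    simpl in *; try discriminate; [lra|].
  inversion Hpos as [|? ? Hw Hws]; subst.
  pose proof (sumR_nonneg ws Hws).
  destruct (Req_dec w 1) as [->|Hw1].
  - left; rewrite comb_null by (auto; lra); apply pt_eq; coords; ring.
  - right; exists w, (comb (map (Rmult (/ (1 - w))) ws) vs).
    split; [lra|]; split.
    + apply IH.
      * rewrite length_map; lia.
      * apply Forall_map; eapply Forall_impl; [|exact Hws].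
        intros u Hu; simpl; apply Rmult_le_pos; auto.
        left; apply Rinv_0_lt_compat; lra.
      * rewrite sumR_scale; replace (sumR ws) with (1 - w) by lra; field; lra.
    + rewrite comb_scale; apply pt_eq; coords; field; lra.
Qed.

Definition vtx (t : tet) (i : nat) : pt :=
  match i with O => ta t | S O => tb t | S (S O) => tc t | _ => td t end.

Lemma verts_vtx (t : tet) : verts t = map (vtx t) (seq 0 4).
Proof. reflexivity. Qed.

Lemma In_verts (t : tet) (v : pt) :
  In v (verts t) -> exists j, (j < 4)%nat /\ v = vtx t j.
Proof.
  rewrite verts_vtx, in_map_iff; intros (j & <- & Hj).
  apply in_seq in Hj; exists j; split; [lia | reflexivity].
Qed.

Definition sum4 (f : nat -> R) : R := f O + f 1%nat + f 2%nat + f 3%nat.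

Definition vol6 (t : tet) : R :=
  dot (psub (tb t) (ta t)) (cross (psub (tc t) (ta t)) (psub (td t) (ta t))).

(* Gradient of the i-th barycentric coordinate: the inward normal of the face
   opposite to vertex i, of length 1/h where h is the height over that face. *)
Definition bgrad (t : tet) (i : nat) : pt :=
  let e1 := psub (tb t) (ta t) in
  let e2 := psub (tc t) (ta t) in
  let e3 := psub (td t) (ta t) in
  pscale (/ vol6 t)
    (match i with
     | O => pscale (-1) (padd (cross e2 e3) (padd (cross e3 e1) (cross e1 e2)))
     | S O => cross e2 e3
     | S (S O) => cross e3 e1
     | _ => cross e1 e2
     end).

(* The i-th barycentric coordinate, an affine function equal to 1 at vertex i. *)
Definition bary (t : tet) (i : nat) (x : pt) : R :=
  dot (bgrad t i) x + ((match i with O => 1 | _ => 0 end) - dot (bgrad t i) (ta t)).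

Definition bcomb (t : tet) (w : nat -> R) : pt :=
  comb [w O; w 1%nat; w 2%nat; w 3%nat] (verts t).

Lemma bary_vtx (t : tet) (i j : nat) : nondegenerate t -> (i < 4)%nat -> (j < 4)%nat ->
  bary t i (vtx t j) = if Nat.eqb i j then 1 else 0.
Proof.
  destruct t as [a b c d]; unfold nondegenerate; simpl; intros H Hi Hj.
  destruct i as [|[|[|[|i]]]]; try lia; destruct j as [|[|[|[|j]]]]; try lia;
    unfold bary, bgrad, vol6; simpl; coords; field; exact H.
Qed.

(* The four coordinates always sum to 1 (the gradients sum to zero). *)
Lemma bary_sum (t : tet) (x : pt) : sum4 (fun i => bary t i x) = 1.
Proof. unfold sum4, bary, bgrad; coords; ring. Qed.

Lemma bary_shift (t : tet) (i : nat) (x v : pt) :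
  bary t i (padd x v) = bary t i x + dot (bgrad t i) v.
Proof. unfold bary; coords; ring. Qed.

Lemma bary_sub (t : tet) (i : nat) (x y : pt) :
  bary t i x - bary t i y = dot (bgrad t i) (psub x y).
Proof. unfold bary; coords; ring. Qed.

(* Cramer's rule: a point is the combination of the vertices weighted by its
   barycentric coordinates. *)
Lemma bary_reconstruct (t : tet) (x : pt) :
  nondegenerate t -> bcomb t (fun i => bary t i x) = x.
Proof.
  destruct t as [a b c d]; unfold nondegenerate; simpl; intro H.
  apply pt_eq; unfold bcomb, bary, bgrad, vol6; simpl; coords; field; exact H.
Qed.

Lemma bary_bcomb_sum (t : tet) (w : nat -> R) (i : nat) : sum4 w = 1 ->
  bary t i (bcomb t w) = sum4 (fun j => w j * bary t i (vtx t j)).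
Proof.
  intro Hw; unfold bary.
  set (n := bgrad t i); set (k := (match i with O => 1 | _ => 0 end) - dot n (ta t)).
  clearbody n k.
  enough (E : dot n (bcomb t w) + k - sum4 (fun j => w j * (dot n (vtx t j) + k))
              = k * (1 - sum4 w)) by (rewrite Hw in E; lra).
  unfold sum4, bcomb; simpl; coords; ring.
Qed.

Lemma bary_bcomb (t : tet) (w : nat -> R) (i : nat) :
  nondegenerate t -> (i < 4)%nat -> sum4 w = 1 -> bary t i (bcomb t w) = w i.
Proof.
  intros H Hi Hw; rewrite bary_bcomb_sum by exact Hw; unfold sum4.
  rewrite !bary_vtx by (auto; lia).
  destruct i as [|[|[|[|i]]]]; try lia; simpl; ring.
Qed.

Lemma in_tet_bary (t : tet) (x : pt) : nondegenerate t ->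
  in_tet t x <-> (forall i, (i < 4)%nat -> 0 <= bary t i x).
Proof.
  intro H; split.
  - intros Hx i Hi; apply (conv_affine_lower (verts t)); [exact Hx|].
    intros v Hv; change (0 <= bary t i v).
    destruct (In_verts t v Hv) as (j & Hj & ->).
    rewrite bary_vtx by auto; destruct (Nat.eqb i j); lra.
  - intro Hpos; rewrite <- (bary_reconstruct t x H).
    apply conv_comb; [reflexivity | |].
    + apply Forall_forall; simpl; intros u Hu.
      destruct Hu as [<-|[<-|[<-|[<-|[]]]]]; apply Hpos; lia.
    + pose proof (bary_sum t x); unfold sum4, sumR in *; simpl; lra.
Qed.

Lemma bary_le_1 (t : tet) (i : nat) (x : pt) :
  nondegenerate t -> (i < 4)%nat -> in_tet t x -> bary t i x <= 1.
Proof.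
  intros H Hi Hx; rewrite in_tet_bary in Hx by exact H.
  pose proof (bary_sum t x); unfold sum4 in *.
  pose proof (Hx O ltac:(lia)); pose proof (Hx 1%nat ltac:(lia));
    pose proof (Hx 2%nat ltac:(lia)); pose proof (Hx 3%nat ltac:(lia)).
  destruct i as [|[|[|[|i]]]]; try lia; lra.
Qed.

Lemma vtx_inj (t : tet) (i j : nat) : nondegenerate t -> (i < 4)%nat -> (j < 4)%nat ->
  vtx t i = vtx t j -> i = j.
Proof.
  intros H Hi Hj E; apply (f_equal (bary t i)) in E.
  rewrite !bary_vtx, Nat.eqb_refl in E by auto.
  destruct (Nat.eqb_spec i j); [auto | lra].
Qed.

Lemma verts_NoDup (t : tet) : nondegenerate t -> NoDup (verts t).
Proof.
  intro H; rewrite verts_vtx; apply NoDup_map_NoDup_ForallPairs; [|apply seq_NoDup].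
  intros i j Hi Hj; apply in_seq in Hi, Hj; apply vtx_inj; auto; lia.
Qed.

Lemma bgrad_pos (t : tet) (i : nat) :
  nondegenerate t -> (i < 4)%nat -> 0 < norm (bgrad t i).
Proof.
  intros H Hi; set (j := if Nat.eqb i O then 1%nat else O).
  assert (Hj : (j < 4)%nat) by (unfold j; destruct (Nat.eqb i O); lia).
  assert (Hij : Nat.eqb i j = false)
    by (unfold j; destruct i; simpl; [reflexivity | destruct i; reflexivity]).
  pose proof (bary_sub t i (vtx t i) (vtx t j)) as E.
  rewrite !bary_vtx, Nat.eqb_refl, Hij in E by auto.
  pose proof (cauchy_schwarz (bgrad t i) (psub (vtx t i) (vtx t j))).
  pose proof (norm_ge0 (bgrad t i)); pose proof (norm_ge0 (psub (vtx t i) (vtx t j))).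
  destruct (Req_dec (norm (bgrad t i)) 0) as [Z|Z]; [|lra].
  rewrite Z in *; lra.
Qed.

Lemma bary_along_grad (t : tet) (i : nat) (c : pt) (s : R) :
  0 < norm (bgrad t i) ->
  bary t i (padd c (pscale (s / norm (bgrad t i)) (bgrad t i)))
  = bary t i c + s * norm (bgrad t i).
Proof. intro Hg; rewrite bary_shift, dot_step by exact Hg; reflexivity. Qed.

Lemma ball_in_tet_of_bary (t : tet) (c : pt) (r : R) : nondegenerate t ->
  (forall i, (i < 4)%nat -> r * norm (bgrad t i) <= bary t i c) -> ball_in_tet c r t.
Proof.
  intros H Hc y Hy; apply in_tet_bary; [exact H|]; intros i Hi.
  replace y with (padd c (psub y c)) by (apply pt_eq; coords; ring).
  rewrite bary_shift.
  pose proof (cauchy_schwarz_lower (bgrad t i) (psub y c)).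
  change (norm (psub y c)) with (pdist y c) in *; rewrite pdist_sym in Hy.
  pose proof (norm_ge0 (bgrad t i)); specialize (Hc i Hi); nra.
Qed.

Lemma bary_of_ball_in_tet (t : tet) (c : pt) (r : R) (i : nat) :
  nondegenerate t -> 0 <= r -> (i < 4)%nat -> ball_in_tet c r t ->
  r * norm (bgrad t i) <= bary t i c.
Proof.
  intros H Hr Hi Hball; pose proof (bgrad_pos t i H Hi) as Hg.
  assert (Hz : in_tet t (padd c (pscale (- r / norm (bgrad t i)) (bgrad t i)))).
  { apply Hball; rewrite pdist_padd, norm_step, Rabs_Ropp, Rabs_right by lra; lra. }
  rewrite in_tet_bary in Hz by exact H; specialize (Hz i Hi).
  rewrite bary_along_grad in Hz by exact Hg; lra.
Qed.

(* A ball of radius r in the tetrahedron has diameter at most the height over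
   any face, hence at most the distance from the opposite vertex to that face. *)
Lemma inball_width (t : tet) (c : pt) (r : R) (i : nat) (x y : pt) :
  nondegenerate t -> 0 <= r -> (i < 4)%nat -> ball_in_tet c r t ->
  bary t i x = 1 -> bary t i y = 0 -> 2 * r <= pdist x y.
Proof.
  intros H Hr Hi Hball Hx Hy; pose proof (bgrad_pos t i H Hi) as Hg.
  assert (Hlow := bary_of_ball_in_tet t c r i H Hr Hi Hball).
  assert (Hup : bary t i c + r * norm (bgrad t i) <= 1).
  { rewrite <- bary_along_grad by exact Hg; apply bary_le_1; auto.
    apply Hball; rewrite pdist_padd, norm_step, Rabs_right by lra; lra. }
  assert (Hxy : 1 <= norm (bgrad t i) * pdist x y).
  { pose proof (bary_sub t i x y); pose proof (cauchy_schwarz (bgrad t i) (psub x y)).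
    unfold pdist; fold (norm (psub x y)); lra. }
  apply (Rmult_le_reg_l (norm (bgrad t i))); lra.
Qed.

(* The inradius is the harmonic mean of the heights divided by four. *)
Definition inradius (t : tet) : R := / sum4 (fun i => norm (bgrad t i)).

Definition incenter (t : tet) : pt := bcomb t (fun i => inradius t * norm (bgrad t i)).

Lemma sum4_grad_pos (t : tet) : nondegenerate t -> 0 < sum4 (fun i => norm (bgrad t i)).
Proof.
  intro H; unfold sum4.
  pose proof (bgrad_pos t O H ltac:(lia)); pose proof (bgrad_pos t 1 H ltac:(lia));
    pose proof (bgrad_pos t 2 H ltac:(lia)); pose proof (bgrad_pos t 3 H ltac:(lia)); lra.
Qed.

Lemma incenter_ball (t : tet) :
  nondegenerate t -> ball_in_tet (incenter t) (inradius t) t.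
Proof.
  intro H; apply ball_in_tet_of_bary; [exact H|]; intros i Hi.
  unfold incenter; rewrite bary_bcomb; [lra | auto | auto |].
  pose proof (sum4_grad_pos t H); unfold inradius, sum4 in *; field; lra.
Qed.

Lemma inradius_max (t : tet) (c : pt) (r : R) :
  nondegenerate t -> ball_in_tet c r t -> r <= inradius t.
Proof.
  intros H Hball; pose proof (sum4_grad_pos t H) as HS.
  destruct (Rlt_or_le r 0) as [Hr|Hr].
  { pose proof (Rinv_0_lt_compat _ HS); unfold inradius; lra. }
  assert (Hsum : r * sum4 (fun i => norm (bgrad t i)) <= 1).
  { rewrite <- (bary_sum t c); unfold sum4.
    pose proof (bary_of_ball_in_tet t c r O H Hr ltac:(lia) Hball);
      pose proof (bary_of_ball_in_tet t c r 1 H Hr ltac:(lia) Hball);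
      pose proof (bary_of_ball_in_tet t c r 2 H Hr ltac:(lia) Hball);
      pose proof (bary_of_ball_in_tet t c r 3 H Hr ltac:(lia) Hball); lra. }
  unfold inradius; apply (Rmult_le_reg_r (sum4 (fun i => norm (bgrad t i)))); auto.
  rewrite Rinv_l; lra.
Qed.

Lemma inradius_spec (t : tet) : nondegenerate t -> is_inradius t (inradius t).
Proof.
  intro H; split; [apply Rinv_0_lt_compat, sum4_grad_pos, H|]; split.
  - exists (incenter t); apply incenter_ball, H.
  - intros c r'; apply inradius_max, H.
Qed.

(* For the edge vectors e1 e2 e3 issued from a vertex, the offset w from that
   vertex to the circumcentre: the solution of 2 w.e = e.e, i.e. |w - e| = |w|,
   for e = e1, e2, e3. *)
Definition circum_offset (e1 e2 e3 : pt) : pt :=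
  pscale (/ (2 * dot e1 (cross e2 e3)))
    (padd (pscale (dot e1 e1) (cross e2 e3))
       (padd (pscale (dot e2 e2) (cross e3 e1)) (pscale (dot e3 e3) (cross e1 e2)))).

Lemma circum_offset_spec (e1 e2 e3 e : pt) : dot e1 (cross e2 e3) <> 0 ->
  In e [e1; e2; e3] -> 2 * dot (circum_offset e1 e2 e3) e = dot e e.
Proof.
  intros H He; destruct He as [<-|[<-|[<-|[]]]];
    unfold circum_offset in *; coords; field; exact H.
Qed.

Definition circumcenter (t : tet) : pt :=
  padd (ta t) (circum_offset (psub (tb t) (ta t)) (psub (tc t) (ta t)) (psub (td t) (ta t))).

Definition circumradius (t : tet) : R := pdist (circumcenter t) (ta t).

Lemma circumcenter_equidistant (t : tet) (v : pt) : nondegenerate t ->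
  In v (verts t) -> pdist (circumcenter t) v = circumradius t.
Proof.
  intros H Hv; unfold circumradius, circumcenter, pdist; f_equal.
  set (w := circum_offset _ _ _).
  assert (Hw : forall e, In e [psub (tb t) (ta t); psub (tc t) (ta t); psub (td t) (ta t)] ->
                 2 * dot w e = dot e e) by (intros; apply circum_offset_spec; auto).
  clearbody w.
  destruct Hv as [<-|Hv]; [reflexivity|].
  assert (Hv' : exists e, In e [psub (tb t) (ta t); psub (tc t) (ta t); psub (td t) (ta t)]
                          /\ v = padd (ta t) e).
  { destruct Hv as [<-|[<-|[<-|[]]]];
      [exists (psub (tb t) (ta t)) | exists (psub (tc t) (ta t)) | exists (psub (td t) (ta t))];
      (split; [simpl; tauto | apply pt_eq; coords; ring]). }
  destruct Hv' as (e & He & ->); specialize (Hw e He).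
  transitivity (dot w w - 2 * dot w e + dot e e); [coords; ring|].
  rewrite Hw; coords; ring.
Qed.

Lemma circumradius_spec (t : tet) : nondegenerate t -> is_circumradius t (circumradius t).
Proof.
  intro H; exists (circumcenter t).
  repeat split; apply circumcenter_equidistant; simpl; tauto.
Qed.

(* If v and p are equidistant from o and p is nearer to q than v, then
   v lies on the side of p where the affine map x |-> (o - q).(x - p) is >= 0:
   expand both squared distances. *)
Lemma sphere_nearer_side (o p q v : pt) :
  pdist o v = pdist o p -> pdist q p <= pdist q v ->
  0 <= dot (psub o q) v + - dot (psub o q) p.
Proof.
  intros Ho Hq.
  assert (Hq2 : pdist q p * pdist q p <= pdist q v * pdist q v)
    by (pose proof (pdist_ge0 q p); nra).
  assert (Ho2 : pdist o v * pdist o v = pdist o p * pdist o p) by (rewrite Ho; reflexivity).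
  rewrite !pdist_sq in Hq2, Ho2.
  assert (E : 2 * (dot (psub o q) v + - dot (psub o q) p)
              = (dot (psub q v) (psub q v) - dot (psub q p) (psub q p))
                - (dot (psub o v) (psub o v) - dot (psub o p) (psub o p)))
    by (coords; ring).
  lra.
Qed.

(* If p and the points of l lie on a sphere of radius Rc about o, p is at least
   as close to q as every point of l, and the ray from p towards q meets the
   hull of l beyond p, then |pq| <= Rc: the ray makes an acute angle with o - q,
   so |pq|^2 <= (o - p).(q - p) <= Rc |pq|. *)
Lemma nearest_vertex_within_circumradius (l : list pt) (o p q p' : pt) (Rc s : R) :
  pdist o p = Rc -> (forall v, In v l -> pdist o v = Rc) ->
  (forall v, In v l -> pdist q p <= pdist q v) ->
  in_conv l p' -> 0 < s -> p' = padd p (pscale s (psub q p)) ->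
  pdist p q <= Rc.
Proof.
  intros Hop Hov Hnear Hp' Hs ->; set (m := psub o q).
  assert (Hray : 0 <= dot m (padd p (pscale s (psub q p))) + - dot m p).
  { apply (conv_affine_lower l); [exact Hp'|]; intros v Hv.
    apply sphere_nearer_side; [rewrite Hov, Hop; auto | auto]. }
  assert (Hacute : 0 <= dot m (psub q p)).
  { replace (dot m (padd p (pscale s (psub q p))) + - dot m p)
      with (s * dot m (psub q p)) in Hray by (coords; ring); nra. }
  pose proof (cauchy_schwarz (psub o p) (psub q p)) as C.
  change (dot (psub o p) (psub q p) <= pdist o p * pdist q p) in C; rewrite Hop in C.
  replace (dot (psub o p) (psub q p)) with (dot m (psub q p) + pdist q p * pdist q p)
    in C by (rewrite pdist_sq; unfold m; coords; ring).
  rewrite (pdist_sym q p) in C.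
  pose proof (pdist_ge0 p q); pose proof (pdist_ge0 o p); nra.
Qed.

Lemma opposite_face (t : tet) (p a b c : pt) : nondegenerate t ->
  Permutation (verts t) [p; a; b; c] ->
  exists i, (i < 4)%nat /\ bary t i p = 1 /\ forall v, In v [a; b; c] -> bary t i v = 0.
Proof.
  intros H Hperm.
  assert (Hnd : NoDup [p; a; b; c]) by (apply (Permutation_NoDup Hperm), verts_NoDup, H).
  assert (Hin : forall v, In v [p; a; b; c] -> In v (verts t))
    by (intros v Hv; apply (Permutation_in _ (Permutation_sym Hperm)), Hv).
  destruct (In_verts t p (Hin p (or_introl eq_refl))) as (i & Hi & Ep).
  exists i; split; [exact Hi|]; split.
  - rewrite Ep, bary_vtx, Nat.eqb_refl by auto; reflexivity.
  - intros v Hv; destruct (In_verts t v (Hin v (or_intror Hv))) as (j & Hj & Ev).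
    rewrite Ev, bary_vtx by auto; destruct (Nat.eqb_spec i j) as [<-|]; [|reflexivity].
    apply NoDup_cons_iff in Hnd; destruct Hnd as [Hp _].
    exfalso; apply Hp; rewrite Ep, <- Ev; exact Hv.
Qed.

(* The final estimate: |pq| <= Rc < rho r and 2 r <= |pp'|, and
   rho^2 - 3 rho + 3 > 0 gives 6 rho < 2 (rho^2 + 3). *)
Lemma shape_bound (rho r Rc d w : R) : 0 < r -> 0 <= d -> d <= Rc -> Rc / r < rho ->
  2 * r <= w -> w > 6 / (rho ^ 2 + 3) * d.
Proof.
  intros Hr Hd HdR Hratio Hw.
  assert (HRc : Rc < rho * r)
    by (apply (Rmult_lt_compat_r r) in Hratio; [|exact Hr];
        unfold Rdiv in Hratio; rewrite Rmult_assoc, Rinv_l, Rmult_1_r in Hratio; lra).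
  assert (Hpos : 0 < rho ^ 2 + 3) by nra.
  assert (Hquad : 6 * rho * r <= 2 * r * (rho ^ 2 + 3))
    by (pose proof (pow2_ge_0 (rho - 3 / 2)); nra).
  assert (Hkey : 6 * d < w * (rho ^ 2 + 3)) by nra.
  apply Rlt_gt; unfold Rdiv; rewrite Rmult_comm, <- Rmult_assoc.
  apply (Rmult_lt_reg_r (rho ^ 2 + 3)); [exact Hpos|].
  rewrite Rmult_assoc, Rinv_l by lra; lra.
Qed.

Theorem mainTheorem16 (M : list tet) (rho : R) (q p : pt) (tau : tet)
    (a b c p' : pt) :
  is_tet_mesh M ->
  well_shaped rho M ->
  in_mesh M q ->
  (* p is a vertex of M nearest to q *)
  mesh_vertex M p ->
  (forall v, mesh_vertex M v -> pdist q p <= pdist q v) ->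
  (* tau is a tetrahedron of M with vertices p, a, b, c *)
  In tau M ->
  Permutation (verts tau) [p; a; b; c] ->
  (* tau is the first tetrahedron met by the segment pq leaving p *)
  (exists eps, 0 < eps /\
     forall s, 0 < s <= eps -> in_tet tau (padd p (pscale s (psub q p)))) ->
  ~ in_interior tau q ->
  (* p' is the intersection of pq with the face of tau opposite to p *)
  (exists s, 0 <= s <= 1 /\ p' = padd p (pscale s (psub q p))) ->
  in_conv [a; b; c] p' ->
  pdist p p' > 6 / (rho ^ 2 + 3) * pdist p q.
Proof.
  intros [Hmesh _] [_ Hshape] _ _ Hnear Htau Hperm _ _ (s & Hs & Hp') Hface.
  assert (Hnd : nondegenerate tau) by (apply Hmesh, Htau).
  assert (Hin : forall v, In v [p; a; b; c] -> In v (verts tau))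
    by (intros v Hv; apply (Permutation_in _ (Permutation_sym Hperm)), Hv).
  destruct (inradius_spec tau Hnd) as [Hr _].
  pose proof (Hshape tau Htau _ _ (inradius_spec tau Hnd) (circumradius_spec tau Hnd))
    as Hratio.
  (* (1) the inscribed ball fits between p and the face abc containing p' *)
  destruct (opposite_face tau p a b c Hnd Hperm) as (i & Hi & Hp & Habc).
  assert (Hp'0 : bary tau i p' = 0) by (apply (conv_affine_const [a; b; c]); auto).
  assert (Hwidth : 2 * inradius tau <= pdist p p')
    by (apply (inball_width tau (incenter tau) _ i); auto using incenter_ball; lra).
  assert (Hs0 : 0 < s).
  { destruct Hs as [[Hs0 | <-] _]; [exact Hs0|].
    rewrite Hp', pdist_padd, norm_scale, Rabs_R0, Rmult_0_l in Hwidth; lra. }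
  (* (2) p is nearest to q among the vertices on the circumsphere *)
  assert (Hd : pdist p q <= circumradius tau).
  { apply (nearest_vertex_within_circumradius [a; b; c] (circumcenter tau) p q p' _ s);
      auto.
    - apply circumcenter_equidistant, Hin; simpl; tauto.
    - intros v Hv; apply circumcenter_equidistant, Hin; simpl; tauto.
    - intros v Hv; apply Hnear; exists tau; split; [exact Htau | apply Hin; simpl; tauto]. }
  apply (shape_bound rho (inradius tau) (circumradius tau)); auto using pdist_ge0.
Qed.
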